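(* Let $\phi=\tilde p/p$ be an irreducible rational inner function on $\mathbb{D}^3$ of degree $(m,n,1)$ with $p(z)=p_1(z_1,z_2)+z_3p_2(z_1,z_2)$, $\tilde p(z)=z_3\tilde p_1(z_1,z_2)+\tilde p_2(z_1,z_2)$. Assume $\tau=(\tau_1,\tau_2,\tau_3)\in\mathcal{Z}_p\cap\mathbb{T}^3$ and that the vertical line $\{(\tau_1,\tau_2)\}\times\mathbb{T}$ is not a component of $\mathcal{Z}_p$. Then $\phi^*(\tau)=\frac{\tilde p_2(\tau_1,\tau_2)}{p_1(\tau_1,\tau_2)}$, where $\phi^*(\tau)$ denotes the nontangential limit of $\phi$ at $\tau$.
   Context: A rational inner function (RIF) on $\mathbb{D}^3$ is a rational function holomorphic on the tridisk with unimodular radial limits a.e. on $\mathbb{T}^3$; it is written $\phi=\tilde p/p$ with $p$ zero-free on $\mathbb{D}^3$, $p,\tilde p$ without common factors. For degree $(m,n,1)$, $\tilde p(z)=z_1^mz_2^nz_3\overline{p(1/\bar z_1,1/\bar z_2,1/\bar z_3)}$ and $\tilde p_j(z_1,z_2)=z_1^mz_2^n\overline{p_j(1/\bar z_1,1/\bar z_2)}$. The nontangential limit at $\tau\in\mathbb{T}^3$ is the limit as $z\to\tau$ in $\mathbb{D}^3$ with $\|z-\tau\|\le C(1-\|z\|)$; it exists at every $\tau\in\mathbb{T}^3$ for every RIF. $\mathcal{Z}_p$ is the zero set of $p$. *)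

From HB Require Import structures.
From mathcomp Require Import all_boot all_order all_algebra.
From mathcomp Require Import complex.
From mathcomp Require Import reals.
Set Implicit Arguments. Unset Strict Implicit. Unset Printing Implicit Defensive.
Import Order.TTheory GRing.Theory Num.Theory.
Local Open Scope ring_scope.

(* Bivariate polynomials in (z1,z2): {poly {poly C}}, the OUTER variable is z2
   and the inner one (coefficients) is z1.
   Trivariate polynomials in (z1,z2,z3): {poly {poly {poly C}}}, outer variable
   z3, coefficients bivariate in (z1,z2) as above. *)

Section Defs.
Variable R : realType.
Local Notation C := (R[i]).

Definition ev2 (P : {poly {poly C}}) (z1 z2 : C) : C :=
  (map_poly (fun q : {poly C} => q.[z1]) P).[z2].

Definition ev3 (P : {poly {poly {poly C}}}) (z1 z2 z3 : C) : C :=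
  (map_poly (fun Q : {poly {poly C}} => ev2 Q z1 z2) P).[z3].

Definition deg2_le (m n : nat) (P : {poly {poly C}}) : Prop :=
  (size P <= n.+1)%N /\ forall j, (size (nth 0%R P j) <= m.+1)%N.

Definition deg3_le (m n k : nat) (P : {poly {poly {poly C}}}) : Prop :=
  (size P <= k.+1)%N /\ forall l, deg2_le m n (P`_l).

(* reflection  P~(z1,z2) = z1^m z2^n conj(P(1/conj z1, 1/conj z2)),
   written out on coefficients (coefficient of z1^i z2^j is
   conj of the coefficient of z1^(m-i) z2^(n-j)). *)
Definition refl2 (m n : nat) (P : {poly {poly C}}) : {poly {poly C}} :=
  \poly_(j < n.+1) \poly_(i < m.+1) ((P`_(n - j))`_(m - i))^*%C.

(* reflection  P~(z) = z1^m z2^n z3^k conj(P(1/conj z1,1/conj z2,1/conj z3)) *)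
Definition refl3 (m n k : nat) (P : {poly {poly {poly C}}})
  : {poly {poly {poly C}}} :=
  \poly_(l < k.+1) \poly_(j < n.+1) \poly_(i < m.+1)
     (((P`_(k - l))`_(n - j))`_(m - i))^*%C.

Definition zero_free_D3 (P : {poly {poly {poly C}}}) : Prop :=
  forall z1 z2 z3 : C, `|z1| < 1 -> `|z2| < 1 -> `|z3| < 1 ->
    ev3 P z1 z2 z3 != 0.

Definition common_factor (P Q : {poly {poly {poly C}}}) : Prop :=
  exists D A B : {poly {poly {poly C}}},
    D \isn't a GRing.unit /\ P = D * A /\ Q = D * B.

Definition irreducible3 (P : {poly {poly {poly C}}}) : Prop :=
  P != 0 /\ P \isn't a GRing.unit /\
  forall A B : {poly {poly {poly C}}}, P = A * B ->
    A \is a GRing.unit \/ B \is a GRing.unit.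

(* nontangential limit of f : D^3 -> C at tau in T^3, w.r.t. the max norm
   ||z|| = max_i |z_i|:  for every aperture c > 0, f z -> L as z -> tau
   inside D^3 with ||z - tau|| <= c (1 - ||z||). *)
Definition nt_limit (f : C -> C -> C -> C) (t1 t2 t3 L : C) : Prop :=
  forall c : C, 0 < c -> forall eps : C, 0 < eps ->
  exists delta : C, 0 < delta /\
  forall z1 z2 z3 : C,
    `|z1| < 1 -> `|z2| < 1 -> `|z3| < 1 ->
    (let d := [:: `|z1 - t1|; `|z2 - t2|; `|z3 - t3|] in
     let nz := [:: `|z1|; `|z2|; `|z3|] in
     (forall a b, a \in d -> b \in nz -> a <= c * (1 - b)) ->
     (forall a, a \in d -> a < delta) ->
     `|f z1 z2 z3 - L| < eps).

End Defs.

(* Write [p = p1 + z3 p2], so that [pt = p2~ + z3 p1~], and put [alpha = p1(tau')],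
   [beta = p2(tau')] with [tau' = (tau1, tau2)].  As [p] has no zeros on the tridisk,
   [|p2| <= |p1|] on the bidisk; [p(tau) = 0] and [|tau3| = 1] give [|alpha| = |beta|],
   and [beta <> 0] because the vertical line through [tau] is not in [Z_p].  Then
     [phi(z) - p2~(tau') / alpha
        = (p2~ alpha - p2~(tau') p1) / (p1 alpha) + z3 (p1~ p1 - p2~ p2) / (p1 p)],
   and the first term is [O(|z' - tau'|)].  The defect [p1~ p1 - p2~ p2] vanishes to
   second order at [tau']: up to the factor [z1^m z2^n] it is
   [conj p1(zr) p1(z) - conj p2(zr) p2(z)], where [zr = (1 / conj z1, 1 / conj z2)] is
   the reflection of [z] in the torus, and its first-order part cancels because the
   gradient of the gap [conj alpha p1 - conj beta p2] is normal to the torus at [tau']: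
   to first order, [|p1|^2 - |p2|^2], which is nonnegative on the bidisk and vanishes
   at [tau'], is twice the real part of the gap.  As [|p(z)| >= |beta| (1 - |z3|) / 2]
   near [tau], the second term is [O(|z' - tau'|^2 / (1 - |z3|))], which is
   [O(|z' - tau'|)] in a nontangential approach region. *)

From HB Require Import structures.
From mathcomp Require Import all_boot all_order all_algebra.
From mathcomp Require Import complex reals.
From mathcomp Require Import ring lra.
Set Implicit Arguments. Unset Strict Implicit. Unset Printing Implicit Defensive.
Import Order.TTheory GRing.Theory Num.Theory Normc.
Local Open Scope ring_scope.
Local Open Scope complex_scope.

Section Modulus.
Variable R : rcfType.
Implicit Types (x y : R[i]) (k : R).
Local Notation Re := (@complex.Re R).
Local Notation Im := (@complex.Im R).

Lemma norm_normcE x : `|x| = (normc x)%:C.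
Proof. by case: x. Qed.

Lemma normc_ge0 x : 0 <= normc x.
Proof. by case: x => a b; apply: sqrtr_ge0. Qed.

Lemma normc_eq0 x : (normc x == 0) = (x == 0).
Proof. by apply/eqP/eqP => [/eq0_normc|->]; last exact: normc0. Qed.

Lemma normc_gt0 x : (0 < normc x) = (x != 0).
Proof. by rewrite lt_def normc_eq0 normc_ge0 andbT. Qed.

Lemma normc_conj x : normc x^*%C = normc x.
Proof. by case: x => a b /=; rewrite sqrrN. Qed.

Lemma normcX x n : normc (x ^+ n) = normc x ^+ n.
Proof. by elim: n => [|n IH]; rewrite ?normc1 // !exprS normcM IH. Qed.

Lemma normc_real k : normc k%:C = `|k|.
Proof. by rewrite /= expr0n addr0 sqrtr_sqr. Qed.

Lemma normc_lt1 x : (`|x| < 1) = (normc x < 1).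
Proof. by rewrite norm_normcE -[1](rmorph1 (real_complex R)) ltcR. Qed.

Lemma normc_eq1 x : `|x| = 1 <-> normc x = 1.
Proof. by rewrite norm_normcE; split => [[]|->]. Qed.

Lemma normc_subC x y : normc (x - y) = normc (y - x).
Proof. by rewrite -normcN opprB. Qed.

Lemma normc_sqr x : normc x ^+ 2 = Re x ^+ 2 + Im x ^+ 2.
Proof. by case: x => a b; rewrite /= sqr_sqrtr // addr_ge0 ?sqr_ge0. Qed.

Lemma normc_ge_absRe x : `|Re x| <= normc x.
Proof. by case: x => a b /=; rewrite -sqrtr_sqr ler_wsqrtr // lerDl sqr_ge0. Qed.

Lemma normc_sqrD x y :
  normc (x + y) ^+ 2 = normc x ^+ 2 + 2 * Re (x^*%C * y) + normc y ^+ 2.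
Proof. by rewrite !normc_sqr; case: x => a b; case: y => c d /=; ring. Qed.

Lemma mulcJ x : x * x^*%C = (normc x ^+ 2)%:C.
Proof. by rewrite normc_sqr; case: x => a b; simpc; rewrite !expr2; congr (_ +i* _); ring. Qed.

Lemma normc_le_sqr x k : 0 <= k -> Re x ^+ 2 + Im x ^+ 2 <= k ^+ 2 -> normc x <= k.
Proof. by rewrite -normc_sqr => k0; rewrite ler_pXn2r ?nnegrE ?normc_ge0. Qed.

Lemma normc_lt_sqr x k : 0 <= k -> Re x ^+ 2 + Im x ^+ 2 < k ^+ 2 -> normc x < k.
Proof. by rewrite -normc_sqr => k0; rewrite ltr_pXn2r ?nnegrE ?normc_ge0. Qed.

End Modulus.

Section FirstOrder.
Variable R : rcfType.
Local Notation C := R[i].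
Implicit Types (f g : C -> C -> C).

Definition expansion_at f t1 t2 (d1 d2 : C) (K : R) := forall h1 h2,
  normc h1 <= 1 -> normc h2 <= 1 ->
  normc (f (t1 + h1) (t2 + h2) - f t1 t2 - (d1 * h1 + d2 * h2))
    <= K * (normc h1 + normc h2) ^+ 2.

Definition first_order_at f t1 t2 :=
  exists d1 d2 : C, exists K : R, 0 <= K /\ expansion_at f t1 t2 d1 d2 K.

Lemma normc_linear_le (d1 d2 h1 h2 : C) :
  normc (d1 * h1 + d2 * h2) <= (normc d1 + normc d2) * (normc h1 + normc h2).
Proof.
apply: le_trans (le_normcD _ _) _; rewrite !normcM.
have := normc_ge0 d1; have := normc_ge0 d2; have := normc_ge0 h1; have := normc_ge0 h2.
nra.
Qed.

Lemma expansion_lipschitz f t1 t2 d1 d2 K : 0 <= K -> expansion_at f t1 t2 d1 d2 K ->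
  forall h1 h2, normc h1 <= 1 -> normc h2 <= 1 ->
  normc (f (t1 + h1) (t2 + h2) - f t1 t2)
    <= (normc d1 + normc d2 + 2 * K) * (normc h1 + normc h2).
Proof.
move=> K0 Hf h1 h2 n1 n2; have := Hf h1 h2 n1 n2.
set r := (X in normc X) => Hr.
have -> : f (t1 + h1) (t2 + h2) - f t1 t2 = r + (d1 * h1 + d2 * h2) by rewrite /r; ring.
apply: le_trans (le_normcD _ _) _; have := normc_linear_le d1 d2 h1 h2.
move: Hr; set s := normc h1 + normc h2 => Hr Hd.
have s0 : 0 <= s by rewrite /s; have := normc_ge0 h1; have := normc_ge0 h2; lra.
have s2 : s <= 2 by rewrite /s; lra.
have : K * s ^+ 2 <= 2 * K * s by rewrite expr2; have := mulr_ge0 K0 s0; nra.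
lra.
Qed.

Lemma first_order_lipschitz f t1 t2 : first_order_at f t1 t2 ->
  exists A : R, 0 <= A /\ forall h1 h2, normc h1 <= 1 -> normc h2 <= 1 ->
    normc (f (t1 + h1) (t2 + h2) - f t1 t2) <= A * (normc h1 + normc h2).
Proof.
move=> [d1 [d2 [K [K0 Hf]]]]; exists (normc d1 + normc d2 + 2 * K); split.
  by have := normc_ge0 d1; have := normc_ge0 d2; lra.
exact: expansion_lipschitz.
Qed.

Lemma expansion_combine f g t1 t2 d1 d2 e1 e2 K L (c1 c2 : C) :
  expansion_at f t1 t2 d1 d2 K -> expansion_at g t1 t2 e1 e2 L ->
  expansion_at (fun z1 z2 => c1 * f z1 z2 - c2 * g z1 z2) t1 t2
    (c1 * d1 - c2 * e1) (c1 * d2 - c2 * e2) (normc c1 * K + normc c2 * L).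
Proof.
move=> Hf Hg h1 h2 n1 n2; have := Hf h1 h2 n1 n2; have := Hg h1 h2 n1 n2.
set x := (X in normc X <= K * _); set y := (X in normc X <= L * _) => Hy Hx.
rewrite (_ : _ - _ - _ = c1 * x - c2 * y); last by rewrite /x /y; ring.
apply: le_trans (le_normcD _ _) _; rewrite normcN !normcM mulrDl -!mulrA.
by apply: lerD; apply: ler_wpM2l; rewrite ?normc_ge0.
Qed.

Lemma eq_first_order f g t1 t2 : f =2 g -> first_order_at f t1 t2 -> first_order_at g t1 t2.
Proof.
move=> fg [d1 [d2 [K [K0 Hf]]]]; exists d1, d2, K; split => // h1 h2 n1 n2.
by rewrite -!fg; apply: Hf.
Qed.

Lemma first_order_cst (k : C) t1 t2 : first_order_at (fun _ _ => k) t1 t2.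
Proof.
exists 0, 0, 0; split => // h1 h2 _ _.
by rewrite (_ : _ - _ - _ = 0) ?normc0 ?mul0r //; ring.
Qed.

Lemma first_order_fst t1 t2 : first_order_at (fun z1 _ => z1) t1 t2.
Proof.
exists 1, 0, 0; split => // h1 h2 _ _.
by rewrite (_ : _ - _ - _ = 0) ?normc0 ?mul0r //; ring.
Qed.

Lemma first_order_snd t1 t2 : first_order_at (fun _ z2 => z2) t1 t2.
Proof.
exists 0, 1, 0; split => // h1 h2 _ _.
by rewrite (_ : _ - _ - _ = 0) ?normc0 ?mul0r //; ring.
Qed.

Lemma first_order_add f g t1 t2 : first_order_at f t1 t2 -> first_order_at g t1 t2 ->
  first_order_at (fun z1 z2 => f z1 z2 + g z1 z2) t1 t2.
Proof.
move=> [d1 [d2 [K [K0 Hf]]]] [e1 [e2 [L [L0 Hg]]]].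
exists (d1 + e1), (d2 + e2), (K + L); split; first lra.
move=> h1 h2 n1 n2; have := Hf h1 h2 n1 n2; have := Hg h1 h2 n1 n2.
set x := (X in normc X <= K * _); set y := (X in normc X <= L * _) => Hy Hx.
have -> : f (t1 + h1) (t2 + h2) + g (t1 + h1) (t2 + h2) - (f t1 t2 + g t1 t2) -
  ((d1 + e1) * h1 + (d2 + e2) * h2) = x + y by rewrite /x /y; ring.
apply: le_trans (le_normcD _ _) _; lra.
Qed.

Lemma first_order_mul f g t1 t2 : first_order_at f t1 t2 -> first_order_at g t1 t2 ->
  first_order_at (fun z1 z2 => f z1 z2 * g z1 z2) t1 t2.
Proof.
move=> Df Dg.
have [Af [Af0 Lf]] := first_order_lipschitz Df.
have [Ag [Ag0 Lg]] := first_order_lipschitz Dg.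
move: Df Dg => [d1 [d2 [K [K0 Hf]]]] [e1 [e2 [L [L0 Hg]]]].
exists (f t1 t2 * e1 + g t1 t2 * d1), (f t1 t2 * e2 + g t1 t2 * d2),
  (Af * Ag + normc (f t1 t2) * L + normc (g t1 t2) * K); split.
  by have := normc_ge0 (f t1 t2); have := normc_ge0 (g t1 t2); nra.
move=> h1 h2 n1 n2; have := Hf h1 h2 n1 n2; have := Hg h1 h2 n1 n2.
have := Lf h1 h2 n1 n2; have := Lg h1 h2 n1 n2.
set f0 := f t1 t2; set g0 := g t1 t2.
set F := f (t1 + h1) (t2 + h2); set G := g (t1 + h1) (t2 + h2).
set x := (X in normc X <= K * _); set y := (X in normc X <= L * _) => LG LF Hy Hx.
have -> : F * G - f0 * g0 - ((f0 * e1 + g0 * d1) * h1 + (f0 * e2 + g0 * d2) * h2)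
  = (F - f0) * (G - g0) + (f0 * y + g0 * x) by rewrite /x /y; ring.
apply: le_trans (le_normcD _ _) _; rewrite normcM.
apply: le_trans (lerD (lexx _) (le_normcD _ _)) _; rewrite !normcM.
have := normc_ge0 f0; have := normc_ge0 g0.
have := normc_ge0 (F - f0); have := normc_ge0 (G - g0).
move: LG LF Hy Hx; set s := normc h1 + normc h2 => LG LF Hy Hx.
have s0 : 0 <= s by rewrite /s; have := normc_ge0 h1; have := normc_ge0 h2; lra.
rewrite expr2 in Hy Hx *.
nra.
Qed.

End FirstOrder.

Section Evaluation.
Variable R : realType.
Local Notation C := R[i].

Lemma ev2E (P : {poly {poly C}}) z1 z2 : ev2 P z1 z2 = (map_poly (horner_eval z1) P).[z2].
Proof. by []. Qed.

Lemma ev2_MXaddC (Q : {poly {poly C}}) (c : {poly C}) z1 z2 :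
  ev2 (Q * 'X + c%:P) z1 z2 = ev2 Q z1 z2 * z2 + c.[z1].
Proof. by rewrite !ev2E rmorphD rmorphM /= map_polyX map_polyC hornerMXaddC. Qed.

Lemma first_order_horner (c : {poly C}) t1 t2 : first_order_at (fun z1 _ => c.[z1]) t1 t2.
Proof.
elim/poly_ind: c => [|c k IH].
  by apply: eq_first_order (first_order_cst 0 t1 t2) => z1 z2; rewrite horner0.
apply: eq_first_order (first_order_add (first_order_mul IH (first_order_fst t1 t2))
  (first_order_cst k t1 t2)) => z1 z2.
by rewrite hornerMXaddC.
Qed.

Lemma first_order_ev2 (P : {poly {poly C}}) t1 t2 : first_order_at (ev2 P) t1 t2.
Proof.
elim/poly_ind: P => [|Q c IH].
  by apply: eq_first_order (first_order_cst 0 t1 t2) => z1 z2; rewrite ev2E rmorph0 horner0.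
apply: eq_first_order (first_order_add (first_order_mul IH (first_order_snd t1 t2))
  (first_order_horner c t1 t2)) => z1 z2.
by rewrite ev2_MXaddC.
Qed.

Lemma ev3_size2 (P : {poly {poly {poly C}}}) z1 z2 z3 : (size P <= 2)%N ->
  ev3 P z1 z2 z3 = ev2 P`_0 z1 z2 + ev2 P`_1 z1 z2 * z3.
Proof.
move=> sP; rewrite /ev3 (@horner_coef_wide _ 2); last exact: leq_trans (size_poly _ _) sP.
have ev2_0 : ev2 (0 : {poly {poly C}}) z1 z2 = 0 by rewrite ev2E rmorph0 horner0.
by rewrite !big_ord_recl big_ord0 /= !coef_map_id0 // expr0 mulr1 expr1 addr0.
Qed.

Lemma ev3_affine (p1 p2 : {poly {poly C}}) z1 z2 z3 :
  ev3 (p1%:P + 'X * p2%:P) z1 z2 z3 = ev2 p1 z1 z2 + ev2 p2 z1 z2 * z3.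
Proof.
rewrite ev3_size2 ?coefD ?coefC ?[_ * p2%:P]mulrC ?coefMX ?coefC ?addr0 ?add0r //.
apply: leq_trans (size_polyD _ _) _; rewrite geq_max (leq_trans (size_polyC_leq1 _)) //=.
apply: leq_trans (size_polyMleq _ _) _; rewrite size_polyX.
by have := size_polyC_leq1 p2; case: (size _) => [|[]].
Qed.

Lemma ev3_refl3_affine m n (p1 p2 : {poly {poly C}}) z1 z2 z3 :
  ev3 (refl3 m n 1 (p1%:P + 'X * p2%:P)) z1 z2 z3 =
  ev2 (refl2 m n p2) z1 z2 + ev2 (refl2 m n p1) z1 z2 * z3.
Proof.
rewrite ev3_size2 ?size_poly // /refl3 !coef_poly /=.
by rewrite !coefD !coefC ![_ * p2%:P]mulrC !coefMX !coefC /= addr0 add0r.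
Qed.

Lemma ev2_sum m n (P : {poly {poly C}}) z1 z2 : deg2_le m n P ->
  ev2 P z1 z2 = \sum_(j < n.+1) \sum_(i < m.+1) (P`_j)`_i * z1 ^+ i * z2 ^+ j.
Proof.
move=> [sP sPj]; rewrite ev2E (@horner_coef_wide _ n.+1); last first.
  exact: leq_trans (size_poly _ _) sP.
apply: eq_bigr => j _; rewrite coef_map_id0 ?rmorph0 //= horner_evalE.
by rewrite (@horner_coef_wide _ m.+1) // mulr_suml.
Qed.

Lemma deg2_le_refl2 m n (P : {poly {poly C}}) : deg2_le m n (refl2 m n P).
Proof.
split=> [|j]; first exact: size_poly.
by rewrite /refl2 coef_poly; case: ifP => _; rewrite ?size_poly ?size_poly0.
Qed.

Lemma ev2_refl2 m n (P : {poly {poly C}}) z1 z2 : deg2_le m n P ->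
  z1 != 0 -> z2 != 0 ->
  ev2 (refl2 m n P) z1 z2 = z1 ^+ m * z2 ^+ n * (ev2 P (z1^*%C)^-1 (z2^*%C)^-1)^*%C.
Proof.
move=> dP z1_0 z2_0; rewrite (ev2_sum z1 z2 (deg2_le_refl2 m n P)) (ev2_sum _ _ dP).
rewrite rmorph_sum mulr_sumr [LHS](reindex_inj rev_ord_inj); apply: eq_bigr => j _.
rewrite rmorph_sum mulr_sumr [LHS](reindex_inj rev_ord_inj); apply: eq_bigr => i _.
rewrite /refl2 coef_poly /= ltn_subrL /= coef_poly ltn_subrL /= !subSS.
have lej : (j <= n)%N by rewrite -ltnS.
have lei : (i <= m)%N by rewrite -ltnS.
rewrite !subKn // !rmorphM /= !rmorphXn /= !fmorphV /= !conjcK !exprVn.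
have -> : z1 ^+ m = z1 ^+ (m - i) * z1 ^+ i by rewrite -exprD subnK.
have -> : z2 ^+ n = z2 ^+ (n - j) * z2 ^+ j by rewrite -exprD subnK.
by field; rewrite !expf_neq0.
Qed.

End Evaluation.

Section BoundaryGeometry.
Variable R : rcfType.
Local Notation C := R[i].
Local Notation Re := (@complex.Re R).
Local Notation Im := (@complex.Im R).

Lemma normc_add1_lt1 (w : C) : 2 * Re w + normc w ^+ 2 < 0 -> normc (1 + w) < 1.
Proof.
rewrite normc_sqr => Hw; apply: normc_lt_sqr => //.
by case: w Hw => a b /= Hw; rewrite add0r expr1n; lra.
Qed.

Lemma normc_addM_lt1 (t w : C) : normc t = 1 -> 2 * Re w + normc w ^+ 2 < 0 ->
  normc (t + t * w) < 1.
Proof. by move=> nt /normc_add1_lt1; rewrite -{1}[t]mulr1 -mulrDr normcM nt mul1r. Qed.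

Lemma inward_test_directions (t1 t2 : C) (x eps sg : R) :
  normc t1 = 1 -> normc t2 = 1 -> 0 < x -> 2 * x <= eps -> eps <= 1 -> sg ^+ 2 = 1 ->
  [/\ normc (t1 + t1 * ((- (x * eps)) +i* (sg * x))) < 1,
      normc (t2 + t2 * (- (x * eps))%:C) < 1,
      normc ((- (x * eps)) +i* (sg * x)) <= 2 * x &
      normc (- (x * eps))%:C = x * eps].
Proof.
move=> nt1 nt2 x0 x2 eps1 sg2.
have xe0 : 0 < x * eps by rewrite mulr_gt0 //; lra.
have xxe : x ^+ 2 * eps ^+ 2 <= x ^+ 2 by rewrite ler_piMr ?sqr_ge0 // expr_le1 //; lra.
have xxe' : 2 * x ^+ 2 <= x * eps by rewrite expr2; nra.
set w1 : C := (- (x * eps)) +i* (sg * x); set w2 : C := (- (x * eps))%:C.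
have w1sq : normc w1 ^+ 2 = x ^+ 2 * eps ^+ 2 + x ^+ 2.
  by rewrite normc_sqr /= sqrrN !exprMn sg2 mul1r.
have w2sq : normc w2 ^+ 2 = x ^+ 2 * eps ^+ 2 by rewrite normc_sqr /= expr0n addr0 sqrrN exprMn.
split.
- by apply: normc_addM_lt1; rewrite // w1sq /=; lra.
- by apply: normc_addM_lt1; rewrite // w2sq /=; lra.
- apply: normc_le_sqr; first lra.
  by rewrite -normc_sqr w1sq; have := sqr_ge0 x; lra.
by rewrite normc_real normrN ger0_norm // ltW.
Qed.

Lemma inward_bound_Im_eq0 (t1 t2 g1 g2 : C) (Q : R) :
  normc t1 = 1 -> normc t2 = 1 -> 0 <= Q ->
  (forall h1 h2, normc h1 <= 1 -> normc h2 <= 1 ->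
    normc (t1 + h1) < 1 -> normc (t2 + h2) < 1 ->
    - (Q * (normc h1 + normc h2) ^+ 2) <= Re (g1 * h1 + g2 * h2)) ->
  Im (t1 * g1) = 0.
Proof.
move=> nt1 nt2 Q0 Hg; apply/eqP/negPn/negP => mu0.
set mu := Im (t1 * g1) in mu0; set u1 := Re (t1 * g1); set v1 := Re (t2 * g2).
have amu : 0 < `|mu| by rewrite normr_gt0.
have [sg [sg2 sgmu]] : exists sg : R, sg ^+ 2 = 1 /\ sg * mu = `|mu|.
  have [mu_ge0|mu_lt0] := lerP 0 mu; [exists 1 | exists (-1)].
    by rewrite expr1n mul1r ger0_norm.
  by rewrite sqrrN expr1n mulN1r ltr0_norm.
set M := `|u1| + `|v1| + 1.
have M1 : 1 <= M by rewrite /M; have := normr_ge0 u1; have := normr_ge0 v1; lra.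
have uvM : - (u1 + v1) <= M.
  by rewrite /M; have := ler_norm (- (u1 + v1)); rewrite normrN; have := ler_normD u1 v1; lra.
(* The test points move tangentially by [x] and radially inwards by [x * eps]: the tangential
   part contributes [- x * |mu|], which beats both the radial part, since [eps * M <= |mu| / 4],
   and the quadratic error, since [36 * Q * x <= |mu| / 2]. *)
set eps := `|mu| / (4 * M + `|mu|).
have epsE : eps * (4 * M + `|mu|) = `|mu| by rewrite /eps mulfVK //; apply: lt0r_neq0; lra.
have eps0 : 0 < eps by rewrite /eps divr_gt0 //; lra.
have eps1 : eps <= 1 by nra.
set x := eps * `|mu| / (2 * (36 * Q + `|mu|)).
have xE : x * (2 * (36 * Q + `|mu|)) = eps * `|mu| by rewrite /x mulfVK //; apply: lt0r_neq0; lra.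
have x0 : 0 < x by rewrite /x; apply: divr_gt0; [apply: mulr_gt0 | ]; lra.
have x2 : 2 * x <= eps by nra.
have xQ : 36 * Q * x <= `|mu| * eps / 2 by nra.
have [in1 in2 nw1 nw2] := inward_test_directions nt1 nt2 x0 x2 eps1 sg2.
move: in1 in2 nw1 nw2; set w1 : C := (- (x * eps)) +i* (sg * x).
set w2 : C := (- (x * eps))%:C => in1 in2 nw1 nw2.
have ReE : Re (g1 * (t1 * w1) + g2 * (t2 * w2)) = - (x * eps) * (u1 + v1) - x * `|mu|.
  rewrite (_ : _ + _ = t1 * g1 * w1 + t2 * g2 * w2); last by ring.
  rewrite -sgmu /u1 /v1 /mu; case: (t1 * g1) => a b; case: (t2 * g2) => c d /=; ring.
have := Hg (t1 * w1) (t2 * w2); rewrite !normcM nt1 nt2 !mul1r ReE nw2.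
have xe0 : 0 <= x * eps by apply: mulr_ge0; lra.
have xe1 : x * eps <= x by rewrite ler_piMr //; lra.
move=> /(_ ltac:(lra) ltac:(lra) in1 in2) H.
have s3 : (normc w1 + x * eps) ^+ 2 <= (3 * x) ^+ 2.
  by rewrite ler_pXn2r ?nnegrE ?addr_ge0 ?normc_ge0 //; lra.
have A1 := ler_wpM2l Q0 s3; have A2 := ler_wpM2l xe0 uvM.
have A3 : `|mu| <= 9 * Q * x + eps * M.
  by rewrite -(ler_pM2l x0); rewrite exprMn in A1; lra.
have : 0 <= eps * `|mu| by rewrite mulr_ge0 ?normr_ge0 // ltW.
lra.
Qed.

Lemma reflection_expansion (t h : C) : normc t = 1 -> normc h <= 1 / 2 ->
  let k := ((t + h)^*%C)^-1 - t in
  normc k <= 2 * normc h /\ normc (k + t ^+ 2 * h^*%C) <= 2 * normc h ^+ 2.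
Proof.
move=> nt nh k; set u := t * h^*%C.
have nu : normc u = normc h by rewrite /u normcM nt mul1r normc_conj.
have n1u : 1 / 2 <= normc (1 + u).
  by have := le_normcD (1 + u) (- u); rewrite addrK normc1 normcN; lra.
have u1 : 1 + u != 0 by rewrite -normc_gt0; lra.
have t0 : t != 0 by rewrite -normc_gt0 nt ltr01.
have tJ : t^*%C = t^-1.
  by apply: (mulfI t0); rewrite mulfV // mulcJ nt expr1n.
have kE : k = - (t * u) / (1 + u).
  rewrite /k (_ : (t + h)^*%C = t^*%C + h^*%C) ?rmorphD //.
  rewrite tJ (_ : t^-1 + _ = (1 + u) / t); last by rewrite /u; field.
  by rewrite invf_div; field.
have eE : k + t ^+ 2 * h^*%C = t * u ^+ 2 / (1 + u) by rewrite kE /u; field.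
have nh0 := normc_ge0 h.
split.
  by rewrite kE normcM normcN !normcM nt normc_conj !mul1r normcV ler_pdivrMr; [nra | lra].
by rewrite eE !normcM nt normc_conj !mul1r normcV ler_pdivrMr; [nra | lra].
Qed.

End BoundaryGeometry.

Lemma conjcD (R : rcfType) (x y : R[i]) : (x + y)^*%C = x^*%C + y^*%C.
Proof. by rewrite rmorphD. Qed.

Lemma conjcB (R : rcfType) (x y : R[i]) : (x - y)^*%C = x^*%C - y^*%C.
Proof. by rewrite rmorphB. Qed.

Lemma conjcM (R : rcfType) (x y : R[i]) : (x * y)^*%C = x^*%C * y^*%C.
Proof. by rewrite rmorphM. Qed.

Lemma conjcX (R : rcfType) (x : R[i]) n : (x ^+ n)^*%C = x^*%C ^+ n.
Proof. by rewrite rmorphXn. Qed.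

Lemma tangential_conj_cancel (R : rcfType) (t G h k : R[i]) :
  normc t = 1 -> complex.Im (t * G) = 0 ->
  G * h + (G * k)^*%C = (G * (k + t ^+ 2 * h^*%C))^*%C.
Proof.
move=> nt ImtG.
have tt : t * t^*%C = 1 by rewrite mulcJ nt expr1n.
have rG : t^*%C * G^*%C = t * G.
  by rewrite -conjcM; move: ImtG; case: (t * G) => a b /= ->; rewrite oppr0.
have e : G^*%C * t^*%C ^+ 2 = G.
  have -> : G^*%C * t^*%C ^+ 2 = t^*%C * (t^*%C * G^*%C) by ring.
  by rewrite rG mulrA [t^*%C * t]mulrC tt mul1r.
by rewrite !(conjcM, conjcD, conjcX) conjcK mulrDr -{1}e; ring.
Qed.

Lemma normc_subJM_le (R : rcfType) (x y u v : R[i]) :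
  normc (x^*%C * y - u^*%C * v) <= normc x * normc y + normc u * normc v.
Proof. by apply: le_trans (le_normcD _ _) _; rewrite normcN !normcM !normc_conj. Qed.

Lemma normc_conjM_le (R : rcfType) (G e h : R[i]) (s : R) :
  normc e <= 2 * normc h ^+ 2 -> normc h <= s -> normc ((G * e)^*%C) <= 2 * normc G * s ^+ 2.
Proof.
move=> ne hs; rewrite normc_conj normcM -mulrA mulrCA ler_wpM2l ?normc_ge0 //.
apply: le_trans ne _; rewrite ler_pM2l // ler_pXn2r ?nnegrE ?normc_ge0 //.
exact: le_trans (normc_ge0 h) hs.
Qed.

Lemma normc_lipschitz_mul_le (R : rcfType) (x y : R[i]) (A s sk : R) :
  0 <= A -> 0 <= s -> sk <= 2 * s -> normc x <= A * sk -> normc y <= A * s ->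
  normc x * normc y <= 2 * A ^+ 2 * s ^+ 2.
Proof.
move=> A0 s0 sks hx hy; apply: le_trans (ler_pM (normc_ge0 _) (normc_ge0 _) hx hy) _.
by have := ler_wpM2l (mulr_ge0 A0 (mulr_ge0 A0 s0)) sks; rewrite !expr2; lra.
Qed.

Definition modulus_gap (R : rcfType) (f g : R[i] -> R[i] -> R[i]) (t1 t2 z1 z2 : R[i]) :=
  (f t1 t2)^*%C * f z1 z2 - (g t1 t2)^*%C * g z1 z2.

Section ModulusGap.
Variable R : rcfType.
Local Notation C := R[i].
Local Notation Re := (@complex.Re R).
Local Notation Im := (@complex.Im R).
Variables (f g : C -> C -> C) (t1 t2 : C).
Hypotheses (nt1 : normc t1 = 1) (nt2 : normc t2 = 1).
Hypothesis g_le_f : forall z1 z2, normc z1 < 1 -> normc z2 < 1 ->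
  normc (g z1 z2) <= normc (f z1 z2).
Hypothesis gap_center : normc (f t1 t2) = normc (g t1 t2).

Local Notation al := (f t1 t2).
Local Notation be := (g t1 t2).
Local Notation gap := (modulus_gap f g t1 t2).

Lemma modulus_gap_center : gap t1 t2 = 0.
Proof. by rewrite /modulus_gap ![_^*%C * _]mulrC !mulcJ gap_center subrr. Qed.

Lemma modulus_gap_expansion a1 a2 b1 b2 Ka Kb :
  expansion_at f t1 t2 a1 a2 Ka -> expansion_at g t1 t2 b1 b2 Kb ->
  expansion_at gap t1 t2 (al^*%C * a1 - be^*%C * b1) (al^*%C * a2 - be^*%C * b2)
    (normc al * Ka + normc be * Kb).
Proof.
by move=> Ef Eg; rewrite -[normc al]normc_conj -[normc be]normc_conj; exact: expansion_combine.
Qed.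

Lemma modulus_gap_remainder a1 a2 b1 b2 Ka Kb :
  expansion_at f t1 t2 a1 a2 Ka -> expansion_at g t1 t2 b1 b2 Kb ->
  forall h1 h2, normc h1 <= 1 -> normc h2 <= 1 ->
  normc (gap (t1 + h1) (t2 + h2) - ((al^*%C * a1 - be^*%C * b1) * h1
                                    + (al^*%C * a2 - be^*%C * b2) * h2))
    <= (normc al * Ka + normc be * Kb) * (normc h1 + normc h2) ^+ 2.
Proof.
move=> Ef Eg h1 h2 n1 n2.
by have := modulus_gap_expansion Ef Eg n1 n2; rewrite modulus_gap_center subr0.
Qed.

Lemma modulus_gap_Re_lower_bound a1 a2 b1 b2 Ka Kb : 0 <= Ka ->
  expansion_at f t1 t2 a1 a2 Ka -> expansion_at g t1 t2 b1 b2 Kb ->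
  exists Q : R, 0 <= Q /\ forall h1 h2, normc h1 <= 1 -> normc h2 <= 1 ->
    normc (t1 + h1) < 1 -> normc (t2 + h2) < 1 ->
    - (Q * (normc h1 + normc h2) ^+ 2)
      <= Re ((al^*%C * a1 - be^*%C * b1) * h1 + (al^*%C * a2 - be^*%C * b2) * h2).
Proof.
move=> Ka0 Ef Eg; set A := normc a1 + normc a2 + 2 * Ka.
exists (A ^+ 2 + `|normc al * Ka + normc be * Kb|); split.
  by rewrite addr_ge0 ?sqr_ge0.
move=> h1 h2 n1 n2 i1 i2; set s := normc h1 + normc h2.
set Y := f (t1 + h1) (t2 + h2) - al; set V := g (t1 + h1) (t2 + h2) - be.
(* [|g|^2 <= |f|^2] at [t + h], expanded around [t] where [|f| = |g|]. *)
have dom : normc (be + V) ^+ 2 <= normc (al + Y) ^+ 2.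
  rewrite ler_pXn2r ?nnegrE ?normc_ge0 // /Y /V !subrKC.
  exact: g_le_f.
rewrite (normc_sqrD be) (normc_sqrD al) gap_center in dom.
have lipY : normc Y <= A * s by apply: expansion_lipschitz.
have As0 : 0 <= A * s by rewrite mulr_ge0 ?addr_ge0 ?mulr_ge0 ?normc_ge0.
have Y2 : normc Y ^+ 2 <= (A * s) ^+ 2 by rewrite ler_pXn2r ?nnegrE ?normc_ge0.
have gapE : gap (t1 + h1) (t2 + h2) = al^*%C * Y - be^*%C * V.
  by rewrite /modulus_gap /Y /V !mulrBr ![_^*%C * al]mulrC ![_^*%C * be]mulrC !mulcJ gap_center; ring.
have := modulus_gap_remainder Ef Eg n1 n2; rewrite gapE -/s.
set L := (X in normc (_ - X)) => HL.
have := normc_ge_absRe (al^*%C * Y - be^*%C * V - L).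
have ReB : forall u v : C, Re (u - v) = Re u - Re v by move=> [a b] [c d].
rewrite !ReB => /ler_normlP[_ ReL].
have := ler_wpM2r (sqr_ge0 s) (ler_norm (normc al * Ka + normc be * Kb)).
have := sqr_ge0 (normc V); have := mulr_ge0 (sqr_ge0 A) (sqr_ge0 s).
by rewrite exprMn -/L in Y2 *; lra.
Qed.

Lemma modulus_gap_tangent a1 a2 b1 b2 Ka Kb : 0 <= Ka ->
  expansion_at f t1 t2 a1 a2 Ka -> expansion_at g t1 t2 b1 b2 Kb ->
  Im (t1 * (al^*%C * a1 - be^*%C * b1)) = 0 /\ Im (t2 * (al^*%C * a2 - be^*%C * b2)) = 0.
Proof.
move=> Ka0 Ef Eg; have [Q [Q0 HQ]] := modulus_gap_Re_lower_bound Ka0 Ef Eg.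
split; first exact: inward_bound_Im_eq0 nt1 nt2 Q0 HQ.
apply: (inward_bound_Im_eq0 nt2 nt1 Q0) => h2 h1 n2 n1 i2 i1.
by rewrite [normc h2 + _]addrC [_ * h2 + _]addrC; apply: HQ.
Qed.

Lemma reflected_gap_split z1 z2 w1 w2 :
  (f w1 w2)^*%C * f z1 z2 - (g w1 w2)^*%C * g z1 z2 =
  gap z1 z2 + (gap w1 w2)^*%C
  + ((f w1 w2 - al)^*%C * (f z1 z2 - al) - (g w1 w2 - be)^*%C * (g z1 z2 - be)).
Proof.
have aa : al * al^*%C = be * be^*%C by rewrite !mulcJ gap_center.
rewrite /modulus_gap !(conjcB, conjcM) !conjcK.
by rewrite -[LHS]addr0 -(subrr (al * al^*%C)) {2}aa; ring.
Qed.

Section Reflection.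
Variables (a1 a2 b1 b2 : C) (Ka Kb : R).
Hypotheses (Ka0 : 0 <= Ka) (Kb0 : 0 <= Kb).
Hypotheses (Ef : expansion_at f t1 t2 a1 a2 Ka) (Eg : expansion_at g t1 t2 b1 b2 Kb).
Local Notation G1 := (al^*%C * a1 - be^*%C * b1).
Local Notation G2 := (al^*%C * a2 - be^*%C * b2).
Local Notation Kgap := (normc al * Ka + normc be * Kb).
Local Notation Af := (normc a1 + normc a2 + 2 * Ka).
Local Notation Ag := (normc b1 + normc b2 + 2 * Kb).

(* For the reflection [t + k = 1 / conj (t + h)], the terms [k + t ^+ 2 * conj h] are
   of second order in [h] ([reflection_expansion]); the identity rests on the tangency
   [modulus_gap_tangent]. *)
Lemma reflected_gap_decomposition h1 h2 k1 k2 :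
  (f (t1 + k1) (t2 + k2))^*%C * f (t1 + h1) (t2 + h2)
    - (g (t1 + k1) (t2 + k2))^*%C * g (t1 + h1) (t2 + h2) =
  (G1 * (k1 + t1 ^+ 2 * h1^*%C))^*%C + (G2 * (k2 + t2 ^+ 2 * h2^*%C))^*%C
  + (gap (t1 + h1) (t2 + h2) - (G1 * h1 + G2 * h2))
  + (gap (t1 + k1) (t2 + k2) - (G1 * k1 + G2 * k2))^*%C
  + ((f (t1 + k1) (t2 + k2) - al)^*%C * (f (t1 + h1) (t2 + h2) - al)
     - (g (t1 + k1) (t2 + k2) - be)^*%C * (g (t1 + h1) (t2 + h2) - be)).
Proof.
have [T1 T2] := modulus_gap_tangent Ka0 Ef Eg.
rewrite -(tangential_conj_cancel _ _ nt1 T1) -(tangential_conj_cancel _ _ nt2 T2).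
by rewrite reflected_gap_split !(conjcB, conjcD, conjcM, conjcK); ring.
Qed.

Lemma reflected_gap_bound_at h1 h2 : normc h1 <= 1 / 2 -> normc h2 <= 1 / 2 ->
  normc ((f ((t1 + h1)^*%C)^-1 ((t2 + h2)^*%C)^-1)^*%C * f (t1 + h1) (t2 + h2)
         - (g ((t1 + h1)^*%C)^-1 ((t2 + h2)^*%C)^-1)^*%C * g (t1 + h1) (t2 + h2))
    <= (2 * (normc G1 + normc G2) + 5 * Kgap + 2 * (Af ^+ 2 + Ag ^+ 2))
       * (normc h1 + normc h2) ^+ 2.
Proof.
move=> n1 n2; have [nk1 ne1] := reflection_expansion nt1 n1.
have [nk2 ne2] := reflection_expansion nt2 n2.
move: nk1 ne1 nk2 ne2; set k1 := _ - t1; set k2 := _ - t2.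
have [r1E r2E] : ((t1 + h1)^*%C)^-1 = t1 + k1 /\ ((t2 + h2)^*%C)^-1 = t2 + k2.
  by rewrite /k1 /k2 !subrKC.
rewrite r1E r2E reflected_gap_decomposition.
set s := normc h1 + normc h2 => nk1 ne1 nk2 ne2.
have Egap := modulus_gap_remainder Ef Eg.
have Lf := expansion_lipschitz Ka0 Ef; have Lg := expansion_lipschitz Kb0 Eg.
have [nh1 nh2] := (normc_ge0 h1, normc_ge0 h2).
have [hk1 hk2] : normc k1 <= 1 /\ normc k2 <= 1 by split; lra.
have [hh1 hh2] : normc h1 <= 1 /\ normc h2 <= 1 by split; lra.
have s0 : 0 <= s by rewrite /s; lra.
have sk : normc k1 + normc k2 <= 2 * s by rewrite /s; lra.
have Kgap0 : 0 <= Kgap by rewrite addr_ge0 // mulr_ge0 ?normc_ge0.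
have [hs1 hs2] : normc h1 <= s /\ normc h2 <= s by rewrite /s; split; lra.
have bG1 := normc_conjM_le G1 ne1 hs1; have bG2 := normc_conjM_le G2 ne2 hs2.
have bRh := Egap _ _ hh1 hh2; rewrite -/s in bRh.
have bRk : normc (gap (t1 + k1) (t2 + k2) - (G1 * k1 + G2 * k2))^*%C <= 4 * Kgap * s ^+ 2.
  rewrite normc_conj; apply: le_trans (Egap _ _ hk1 hk2) _.
  have : (normc k1 + normc k2) ^+ 2 <= (2 * s) ^+ 2.
    by rewrite ler_pXn2r ?nnegrE ?addr_ge0 ?normc_ge0 // mulr_ge0.
  by move/(ler_wpM2l Kgap0); rewrite exprMn; lra.
have Af0 : 0 <= Af by rewrite !addr_ge0 ?mulr_ge0 ?normc_ge0.
have Ag0 : 0 <= Ag by rewrite !addr_ge0 ?mulr_ge0 ?normc_ge0.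
have bPf := normc_lipschitz_mul_le Af0 s0 sk (Lf _ _ hk1 hk2) (Lf _ _ hh1 hh2).
have bPg := normc_lipschitz_mul_le Ag0 s0 sk (Lg _ _ hk1 hk2) (Lg _ _ hh1 hh2).
apply: le_trans (le_normcD _ _) _.
apply: le_trans (lerD (le_normcD _ _) (normc_subJM_le _ _ _ _)) _.
apply: le_trans (lerD (lerD (le_normcD _ _) (lexx _)) (lexx _)) _.
apply: le_trans (lerD (lerD (lerD (le_normcD _ _) (lexx _)) (lexx _)) (lexx _)) _.
lra.
Qed.

End Reflection.

Lemma reflected_gap_bound : first_order_at f t1 t2 -> first_order_at g t1 t2 ->
  exists K : R, 0 <= K /\ forall h1 h2, normc h1 <= 1 / 2 -> normc h2 <= 1 / 2 ->
  normc ((f ((t1 + h1)^*%C)^-1 ((t2 + h2)^*%C)^-1)^*%C * f (t1 + h1) (t2 + h2)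
         - (g ((t1 + h1)^*%C)^-1 ((t2 + h2)^*%C)^-1)^*%C * g (t1 + h1) (t2 + h2))
    <= K * (normc h1 + normc h2) ^+ 2.
Proof.
move=> [a1 [a2 [Ka [Ka0 Ef]]]] [b1 [b2 [Kb [Kb0 Eg]]]].
eexists; split; last exact: reflected_gap_bound_at Ka0 Kb0 Ef Eg.
have := mulr_ge0 (normc_ge0 al) Ka0; have := mulr_ge0 (normc_ge0 be) Kb0.
have := normc_ge0 (al^*%C * a1 - be^*%C * b1); have := normc_ge0 (al^*%C * a2 - be^*%C * b2).
have := sqr_ge0 (normc a1 + normc a2 + 2 * Ka).
by have := sqr_ge0 (normc b1 + normc b2 + 2 * Kb); lra.
Qed.

End ModulusGap.

Section PolynomialDefect.
Variable R : realType.
Local Notation C := R[i].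

Lemma normc_shift_bounds (t h : C) : normc t = 1 -> normc h <= 1 / 2 ->
  t + h != 0 /\ normc (t + h) <= 2.
Proof.
move=> nt nh; split; last by have := le_normcD t h; lra.
by rewrite -normc_gt0; have := le_normcD (t + h) (- h); rewrite addrK normcN; lra.
Qed.

Lemma refl2_defect_bound m n (p1 p2 : {poly {poly C}}) (t1 t2 : C) :
  deg2_le m n p1 -> deg2_le m n p2 -> normc t1 = 1 -> normc t2 = 1 ->
  (forall z1 z2, normc z1 < 1 -> normc z2 < 1 -> normc (ev2 p2 z1 z2) <= normc (ev2 p1 z1 z2)) ->
  normc (ev2 p1 t1 t2) = normc (ev2 p2 t1 t2) ->
  exists K : R, 0 <= K /\ forall h1 h2, normc h1 <= 1 / 2 -> normc h2 <= 1 / 2 ->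
    normc (ev2 (refl2 m n p1) (t1 + h1) (t2 + h2) * ev2 p1 (t1 + h1) (t2 + h2)
           - ev2 (refl2 m n p2) (t1 + h1) (t2 + h2) * ev2 p2 (t1 + h1) (t2 + h2))
      <= K * (normc h1 + normc h2) ^+ 2.
Proof.
move=> d1 d2 nt1 nt2 dom gap.
have [K [K0 HK]] := reflected_gap_bound nt1 nt2 dom gap
  (first_order_ev2 p1 t1 t2) (first_order_ev2 p2 t1 t2).
exists (2 ^+ m * 2 ^+ n * K); split => [|h1 h2 n1 n2].
  by rewrite !mulr_ge0 ?exprn_ge0.
have [z1_0 z1_2] := normc_shift_bounds nt1 n1; have [z2_0 z2_2] := normc_shift_bounds nt2 n2.
rewrite !ev2_refl2 // -!mulrA -!mulrBr normcM [normc (_ * _)]normcM mulrA.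
rewrite [X in _ <= X]mulrA; apply: ler_pM; rewrite ?mulr_ge0 ?normc_ge0 ?HK // !normcX.
by apply: ler_pM; rewrite ?exprn_ge0 ?normc_ge0 // lerXn2r ?nnegrE ?normc_ge0.
Qed.

End PolynomialDefect.

Section QuotientBounds.
Variable R : rcfType.
Local Notation C := R[i].

Lemma zero_free_affine_normc_le (a b : C) :
  (forall w, normc w < 1 -> a + b * w != 0) -> normc b <= normc a.
Proof.
move=> Hab; rewrite leNgt; apply/negP => lt_ab.
have b0 : b != 0 by rewrite -normc_gt0; have := normc_ge0 a; lra.
suff /Hab : normc (- a / b) < 1 by rewrite mulrC divfK // subrr eqxx.
by rewrite normcM normcN normcV ltr_pdivrMr ?mul1r ?normc_gt0.
Qed.

Lemma normc_quotient_increment (a a0 b b0 : C) (ea eb : R) :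
  a0 != 0 -> normc (a - a0) <= ea -> normc (b - b0) <= eb -> normc a0 / 2 <= normc a ->
  normc ((b * a0 - b0 * a) / (a * a0)) <= 2 * (eb * normc a0 + normc b0 * ea) / normc a0 ^+ 2.
Proof.
move=> a0_0 ha hb ha2; have na0 : 0 < normc a0 by rewrite normc_gt0.
have na : 0 < normc a by lra.
rewrite (_ : b * a0 - b0 * a = (b - b0) * a0 - b0 * (a - a0)); last by ring.
rewrite normcM normcV normcM ler_pdivrMr ?mulr_gt0 //.
apply: le_trans (le_normcD _ _) _; rewrite normcN !normcM.
have := ler_wpM2r (normc_ge0 a0) hb; have := ler_wpM2l (normc_ge0 b0) ha.
have ea0 : 0 <= ea := le_trans (normc_ge0 _) ha.
have eb0 : 0 <= eb := le_trans (normc_ge0 _) hb.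
set K := 2 * _ / _; have KE : K * normc a0 ^+ 2 = 2 * (eb * normc a0 + normc b0 * ea).
  by rewrite /K divfK // expf_neq0 // lt0r_neq0.
have K0 : 0 <= K.
  by rewrite /K divr_ge0 ?exprn_ge0 ?normc_ge0 // mulr_ge0 // addr_ge0 // mulr_ge0 ?normc_ge0.
have : K * (normc a0 / 2 * normc a0) <= K * (normc a * normc a0).
  by rewrite ler_wpM2l // ler_wpM2r ?normc_ge0.
rewrite (_ : K * (normc a0 / 2 * normc a0) = K * normc a0 ^+ 2 / 2); last by rewrite expr2; ring.
rewrite KE; lra.
Qed.

Lemma normc_defect_quotient_le (a b z D : C) (na nb : R) :
  0 < na -> 0 < nb -> na / 2 <= normc a -> nb / 2 <= normc b -> normc b <= normc a ->
  normc z < 1 ->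
  normc (z * D / (a * (a + b * z))) <= 4 * normc D / (na * nb * (1 - normc z)).
Proof.
move=> na0 nb0 ha hb hba hz; have nz := normc_ge0 z.
have hab : normc b * (1 - normc z) <= normc (a + b * z).
  by have := le_normcD (a + b * z) (- (b * z)); rewrite addrK normcN normcM; nra.
have P0 : 0 < na / 2 * (nb / 2 * (1 - normc z)) by apply: mulr_gt0; [|apply: mulr_gt0]; lra.
have P : na / 2 * (nb / 2 * (1 - normc z)) <= normc (a * (a + b * z)).
  rewrite normcM; apply: ler_pM; rewrite ?mulr_ge0 //; try lra.
  by apply: le_trans hab; rewrite ler_wpM2r // subr_ge0 ltW.
have nz1 : 1 - normc z != 0 by rewrite subr_eq0 eq_sym lt_eqF.
rewrite (_ : 4 * _ / _ = normc D / (na / 2 * (nb / 2 * (1 - normc z)))); last first.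
  by field; rewrite nz1 !lt0r_neq0.
rewrite normcM normcV normcM ler_pM ?mulr_ge0 ?invr_ge0 ?normc_ge0 //.
  by rewrite -[X in _ <= X]mul1r ler_wpM2r ?normc_ge0 // ltW.
by rewrite lef_pV2 ?posrE // (lt_le_trans P0 P).
Qed.

End QuotientBounds.

(* Only the part of the nontangential approach condition that constrains [z1], [z2]
   against [|z3|] is retained: this is all the estimate below needs. *)
Definition approach_linear_bound (R : rcfType) (F : R[i] -> R[i] -> R[i] -> R[i])
    (t1 t2 L : R[i]) :=
  forall c : R, 0 < c -> exists d M : R, 0 < d /\ 0 <= M /\
    forall z1 z2 z3, normc z1 < 1 -> normc z2 < 1 -> normc z3 < 1 ->
    normc (z1 - t1) <= c * (1 - normc z3) -> normc (z2 - t2) <= c * (1 - normc z3) ->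
    normc (z1 - t1) < d -> normc (z2 - t2) < d ->
    normc (F z1 z2 z3 - L) <= M * (normc (z1 - t1) + normc (z2 - t2)).

Lemma eq_approach_linear_bound (R : rcfType) (F G : R[i] -> R[i] -> R[i] -> R[i])
    (t1 t2 L : R[i]) :
  (forall z1 z2 z3, F z1 z2 z3 = G z1 z2 z3) ->
  approach_linear_bound F t1 t2 L -> approach_linear_bound G t1 t2 L.
Proof.
move=> FG HF c /HF[d [M [d0 [M0 HM]]]]; exists d, M; do 2 split => //.
by move=> z1 z2 z3; rewrite -FG; apply: HM.
Qed.

Section NontangentialLimit.
Variable R : realType.
Local Notation C := R[i].

Lemma complex_gt0_real (c : C) : 0 < c -> c = (complex.Re c)%:C /\ 0 < complex.Re c.
Proof. by case: c => a b; rewrite ltcE /= => /andP[/eqP -> ]. Qed.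

Lemma nt_limit_of_approach_bound (F : C -> C -> C -> C) (t1 t2 t3 L : C) :
  approach_linear_bound F t1 t2 L -> nt_limit F t1 t2 t3 L.
Proof.
move=> HF c /complex_gt0_real[-> c0] eps /complex_gt0_real[-> eps0].
have [d [M [d0 [M0 HM]]]] := HF _ c0.
set delta := Num.min d (complex.Re eps / (2 * (M + 1))).
have delta0 : 0 < delta by rewrite lt_min d0 divr_gt0 //; lra.
exists delta%:C; split; first by rewrite ltcR.
move=> z1 z2 z3; rewrite !normc_lt1 => i1 i2 i3 /= Hc Hd.
have inE1 (x y z : C) : x \in [:: x; y; z] by rewrite inE eqxx.
have inE2 (x y z : C) : y \in [:: x; y; z] by rewrite !inE eqxx orbT.
have inE3 (x y z : C) : z \in [:: x; y; z] by rewrite !inE eqxx !orbT.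
have := Hc _ _ (inE1 _ _ _) (inE3 _ _ _); have := Hc _ _ (inE2 _ _ _) (inE3 _ _ _).
have := Hd _ (inE1 _ _ _); have := Hd _ (inE2 _ _ _).
rewrite !norm_normcE -[1](rmorph1 (real_complex R)) -!rmorphB -!rmorphM !lecR !ltcR.
rewrite /delta !lt_min => /andP[d2 e2] /andP[d1 e1] c2 c1.
have := HM _ _ _ i1 i2 i3 c1 c2 d1 d2.
have := normc_ge0 (z1 - t1); have := normc_ge0 (z2 - t2).
have M1 : 0 < 2 * (M + 1) by lra.
by move: e1 e2; rewrite !ltr_pdivlMr //; lra.
Qed.

End NontangentialLimit.

Lemma affine_root_normc_eq (R : rcfType) (a b w : R[i]) :
  normc w = 1 -> a + b * w = 0 -> normc a = normc b.
Proof. by move=> nw /eqP; rewrite addr_eq0 => /eqP ->; rewrite normcN normcM nw mulr1. Qed.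

Section QuotientLimit.
Variable R : rcfType.
Local Notation C := R[i].
Variables (A B At Bt : C -> C -> C) (t1 t2 t3 : C) (Aa Ab Abt KD : R).
Local Notation al := (A t1 t2).
Local Notation be := (B t1 t2).
Local Notation Btau := (Bt t1 t2).
Hypothesis nt3 : normc t3 = 1.
Hypothesis zero_free : forall z1 z2 z3, normc z1 < 1 -> normc z2 < 1 -> normc z3 < 1 ->
  A z1 z2 + B z1 z2 * z3 != 0.
Hypothesis B_le_A : forall z1 z2, normc z1 < 1 -> normc z2 < 1 ->
  normc (B z1 z2) <= normc (A z1 z2).
Hypothesis root : al + be * t3 = 0.
Hypothesis B0 : be != 0.
Hypotheses (Aa0 : 0 <= Aa) (Ab0 : 0 <= Ab) (Abt0 : 0 <= Abt) (KD0 : 0 <= KD).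
Hypothesis LA : forall h1 h2, normc h1 <= 1 -> normc h2 <= 1 ->
  normc (A (t1 + h1) (t2 + h2) - al) <= Aa * (normc h1 + normc h2).
Hypothesis LB : forall h1 h2, normc h1 <= 1 -> normc h2 <= 1 ->
  normc (B (t1 + h1) (t2 + h2) - be) <= Ab * (normc h1 + normc h2).
Hypothesis LBt : forall h1 h2, normc h1 <= 1 -> normc h2 <= 1 ->
  normc (Bt (t1 + h1) (t2 + h2) - Btau) <= Abt * (normc h1 + normc h2).
Hypothesis defect : forall h1 h2, normc h1 <= 1 / 2 -> normc h2 <= 1 / 2 ->
  normc (At (t1 + h1) (t2 + h2) * A (t1 + h1) (t2 + h2)
         - Bt (t1 + h1) (t2 + h2) * B (t1 + h1) (t2 + h2))
    <= KD * (normc h1 + normc h2) ^+ 2.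

Local Notation Phi := (fun z1 z2 z3 => (Bt z1 z2 + At z1 z2 * z3) / (A z1 z2 + B z1 z2 * z3)).

Lemma root_normc_gt0 : 0 < normc al /\ 0 < normc be.
Proof. by rewrite (affine_root_normc_eq nt3 root) normc_gt0 B0. Qed.

Local Notation C1 := (2 * (Abt * normc al + normc Btau * Aa) / normc al ^+ 2).

Lemma quotient_increment_bound (c : R) h1 h2 z3 : 0 < c ->
  normc (t1 + h1) < 1 -> normc (t2 + h2) < 1 -> normc z3 < 1 ->
  normc h1 + normc h2 <= 2 * c * (1 - normc z3) ->
  normc h1 <= 1 / 2 -> normc h2 <= 1 / 2 ->
  Aa * (normc h1 + normc h2) <= normc al / 2 -> Ab * (normc h1 + normc h2) <= normc be / 2 ->
  normc (Phi (t1 + h1) (t2 + h2) z3 - Btau / al)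
    <= (C1 + 8 * c * KD / (normc al * normc be)) * (normc h1 + normc h2).
Proof.
move=> c0 i1 i2 i3 sc n1 n2 sA sB /=; have [na0 nb0] := root_normc_gt0.
have [n1' n2'] : normc h1 <= 1 /\ normc h2 <= 1 by split; lra.
have := LA n1' n2'; have := LB n1' n2'; have := LBt n1' n2'; have := defect n1 n2.
have := zero_free i1 i2 i3; have := B_le_A i1 i2.
set A' := A _ _; set B' := B _ _; set At' := At _ _; set Bt' := Bt _ _.
set s := normc h1 + normc h2 in sA sB sc * => BA P0 HD hBt hB hA.
have A'lo : normc al / 2 <= normc A'.
  by have := le_normcD A' (al - A'); rewrite subrKC normc_subC; lra.
have B'lo : normc be / 2 <= normc B'.
  by have := le_normcD B' (be - B'); rewrite subrKC normc_subC; lra.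
have [al0 A'0] : al != 0 /\ A' != 0 by rewrite -!normc_gt0; split; lra.
rewrite (_ : _ - _ = (Bt' * al - Btau * A') / (A' * al)
                     + z3 * (At' * A' - Bt' * B') / (A' * (A' + B' * z3))).
  2: by field; rewrite A'0 al0 P0.
apply: le_trans (le_normcD _ _) _; rewrite [X in _ <= X]mulrDl; apply: lerD.
  rewrite (_ : C1 * s = 2 * (Abt * s * normc al + normc Btau * (Aa * s)) / normc al ^+ 2).
    exact: normc_quotient_increment.
  by field; apply: lt0r_neq0.
apply: le_trans (normc_defect_quotient_le _ na0 nb0 A'lo B'lo BA i3) _.
have z1 : 0 < 1 - normc z3 by rewrite subr_gt0.
rewrite ler_pdivrMr ?mulr_gt0 //.
rewrite (_ : 8 * c * KD / _ * s * _ = 4 * (KD * s * (2 * c * (1 - normc z3)))); last first.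
  by field; rewrite !lt0r_neq0.
apply: ler_wpM2l; first lra.
apply: le_trans HD _; rewrite -mulrA expr2; apply: ler_wpM2l => //.
by apply: ler_wpM2l; rewrite // /s addr_ge0 ?normc_ge0.
Qed.

Lemma quotient_approach_bound : approach_linear_bound Phi t1 t2 (Btau / al).
Proof.
move=> c c0; have [na0 nb0] := root_normc_gt0.
have [Aa1 Ab1] : 0 < 4 * (Aa + 1) /\ 0 < 4 * (Ab + 1).
  by split; rewrite mulr_gt0 // ltr_wpDl.
exists (Num.min (1 / 2) (Num.min (normc al / (4 * (Aa + 1))) (normc be / (4 * (Ab + 1))))).
exists (C1 + 8 * c * KD / (normc al * normc be)); split; last split.
- by rewrite !lt_min; apply/and3P; split; apply: divr_gt0; lra.
- apply: addr_ge0; apply: divr_ge0;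
    rewrite ?exprn_ge0 ?mulr_ge0 ?addr_ge0 ?mulr_ge0 ?normc_ge0 //; lra.
move=> z1 z2 z3 i1 i2 i3 c1 c2.
rewrite !lt_min !ltr_pdivlMr // => /and3P[d11 d12 d13] /and3P[d21 d22 d23].
have := normc_ge0 (z1 - t1); have := normc_ge0 (z2 - t2) => n1 n2.
have := @quotient_increment_bound c (z1 - t1) (z2 - t2) z3; rewrite !subrKC; apply => //;
  have := Aa0; have := Ab0; lra.
Qed.

End QuotientLimit.

Local Close Scope complex_scope.

Theorem lemma4p5 (R : realType) (m n : nat)
    (p1 p2 : {poly {poly R[i]}}) (t1 t2 t3 : R[i]) :
  let p : {poly {poly {poly R[i]}}} := p1%:P + 'X * p2%:P in
  let pt := refl3 m n 1 p in
  deg2_le m n p1 -> deg2_le m n p2 ->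
  (* phi = pt / p is a rational inner function: p zero-free on D^3,
     p and pt without common factors; irreducibility *)
  zero_free_D3 p -> ~ common_factor p pt -> irreducible3 p ->
  (* tau in Z_p /\ T^3 *)
  `|t1| = 1 -> `|t2| = 1 -> `|t3| = 1 -> ev3 p t1 t2 t3 = 0 ->
  (* the vertical line {(t1,t2)} x T does not lie in Z_p *)
  ~ (forall w : R[i], `|w| = 1 -> ev3 p t1 t2 w = 0) ->
  nt_limit (fun z1 z2 z3 => ev3 pt z1 z2 z3 / ev3 p z1 z2 z3) t1 t2 t3
    (ev2 (refl2 m n p2) t1 t2 / ev2 p1 t1 t2).
Proof.
move=> p pt d1 d2 zf _ _ /normc_eq1 nt1 /normc_eq1 nt2 /normc_eq1 nt3.
rewrite /p ev3_affine => root vertical.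
have zero_free z1 z2 z3 : normc z1 < 1 -> normc z2 < 1 -> normc z3 < 1 ->
    ev2 p1 z1 z2 + ev2 p2 z1 z2 * z3 != 0.
  by rewrite -!normc_lt1 -ev3_affine; apply: zf.
have dom z1 z2 : normc z1 < 1 -> normc z2 < 1 -> normc (ev2 p2 z1 z2) <= normc (ev2 p1 z1 z2).
  by move=> i1 i2; apply: zero_free_affine_normc_le => w; apply: zero_free.
have B0 : ev2 p2 t1 t2 != 0.
  apply: contra_notN vertical => /eqP B0 w _.
  by rewrite ev3_affine; move: root; rewrite B0 !mul0r !addr0.
have [KD [KD0 HD]] := refl2_defect_bound d1 d2 nt1 nt2 dom (affine_root_normc_eq nt3 root).
have [Aa [Aa0 LA]] := first_order_lipschitz (first_order_ev2 p1 t1 t2).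
have [Ab [Ab0 LB]] := first_order_lipschitz (first_order_ev2 p2 t1 t2).
have [Abt [Abt0 LBt]] := first_order_lipschitz (first_order_ev2 (refl2 m n p2) t1 t2).
apply/nt_limit_of_approach_bound/eq_approach_linear_bound;
  last exact: quotient_approach_bound nt3 zero_free dom root B0 Aa0 Ab0 Abt0 KD0 LA LB LBt HD.
by move=> z1 z2 z3; rewrite /pt ev3_refl3_affine ev3_affine.
Qed.
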